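(* If $\bar f:[a,b]\to\mathbb{R}_\mathcal{I}$ is continuous on $[a,b]$, then $\bar f$ is interval Riemann integrable on $[a,b]$.
   Context: An interval number is a closed interval $\bar a=[a_l,a_r]$ with $a_l<a_r$ real; $\mathbb{R}_\mathcal{I}$ is the set of interval numbers. Write $a_c=(a_l+a_r)/2$, $a_w=(a_r-a_l)/2>0$, $\bar a=\langle a_c;a_w\rangle=[a_c-a_w,a_c+a_w]$. Operations: $\bar a+\bar b=\langle a_c+b_c;a_wb_w\rangle$, $k\bar a=\langle ka_c;a_w^k\rangle$ for real $k$. Distance $d(\bar a,\bar b)=\sqrt{(a_c-b_c)^2+(\ln a_w-\ln b_w)^2}$; continuity is with respect to $d$. $\bar f$ is interval Riemann integrable with integral $\bar A\in\mathbb{R}_\mathcal{I}$ if for every $\varepsilon>0$ there is $\delta>0$ such that for every partition $a=t_0<\dots<t_n=b$ with $t_i-t_{i-1}<\delta$ and tags $\xi_i\in[t_{i-1},t_i]$, $d\big(\sum_{i=1}^n(t_i-t_{i-1})\bar f(\xi_i),\bar A\big)<\varepsilon$. *)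

From Stdlib Require Import Reals Lra.
Open Scope R_scope.

(* An interval number <c; w> = [c - w, c + w] with w > 0. *)
Record Ival := mkIval { ic : R; iw : R; iw_pos : 0 < iw }.

Definition iadd (a b : Ival) : Ival :=
  mkIval (ic a + ic b) (iw a * iw b) (Rmult_lt_0_compat _ _ (iw_pos a) (iw_pos b)).

Definition iscal (k : R) (a : Ival) : Ival :=
  mkIval (k * ic a) (Rpower (iw a) k) (exp_pos _).

Definition izero : Ival := mkIval 0 1 Rlt_0_1.

Definition idist (a b : Ival) : R :=
  sqrt ((ic a - ic b) ^ 2 + (ln (iw a) - ln (iw b)) ^ 2).

Definition icontinuous_on (f : R -> Ival) (a b : R) : Prop :=
  forall x, a <= x <= b ->
  forall eps, 0 < eps -> exists delta, 0 < delta /\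
    forall y, a <= y <= b -> Rabs (y - x) < delta -> idist (f y) (f x) < eps.

Fixpoint iriemann_sum (f : R -> Ival) (t xi : nat -> R) (n : nat) : Ival :=
  match n with
  | O => izero
  | S m => iadd (iriemann_sum f t xi m) (iscal (t (S m) - t m) (f (xi (S m))))
  end.

Definition tagged_partition_fine (a b delta : R) (n : nat) (t xi : nat -> R) : Prop :=
  t O = a /\ t n = b /\
  (forall i, (i < n)%nat -> t i < t (S i)) /\
  (forall i, (i < n)%nat -> t (S i) - t i < delta) /\
  (forall i, (i < n)%nat -> t i <= xi (S i) <= t (S i)).

Definition interval_integral_is (f : R -> Ival) (a b : R) (A : Ival) : Prop :=
  forall eps, 0 < eps -> exists delta, 0 < delta /\
    forall n t xi, tagged_partition_fine a b delta n t xi ->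
      idist (iriemann_sum f t xi n) A < eps.

Definition interval_riemann_integrable (f : R -> Ival) (a b : R) : Prop :=
  exists A : Ival, interval_integral_is f a b A.

From Stdlib Require Import Reals Lra Lia.
From Coquelicot Require Import Coquelicot.
Open Scope R_scope.

(* The map u |-> (ic u, ln (iw u)) sends interval addition and scaling to the
   vector operations of R^2 and the distance d to the Euclidean one.  Hence an
   interval Riemann sum of f is the pair of real Riemann sums of the continuous
   functions ic o f and ln o iw o f, which converge to their integrals I1, I2,
   and the integral of f is <I1; exp I2>.  Convergence of the real Riemann sums
   follows from uniform continuity, after extending each component continuously
   to R by clamping its argument into [a, b]. *)

Lemma Rabs_le_sqrt_sum_sq u v : Rabs u <= sqrt (u ^ 2 + v ^ 2).
Proof.
  rewrite <- (sqrt_pow2 (Rabs u)) by apply Rabs_pos.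
  apply sqrt_le_1_alt. rewrite pow2_abs. nra.
Qed.

Lemma sqrt_sum_sq_le_Rabs_add u v : sqrt (u ^ 2 + v ^ 2) <= Rabs u + Rabs v.
Proof.
  pose proof (Rabs_pos u); pose proof (Rabs_pos v).
  rewrite <- (sqrt_pow2 (Rabs u + Rabs v)) by lra.
  apply sqrt_le_1_alt. rewrite <- (pow2_abs u), <- (pow2_abs v). nra.
Qed.

Lemma Rabs_ic_sub_le_idist u v : Rabs (ic u - ic v) <= idist u v.
Proof. apply Rabs_le_sqrt_sum_sq. Qed.

Lemma Rabs_ln_iw_sub_le_idist u v : Rabs (ln (iw u) - ln (iw v)) <= idist u v.
Proof. unfold idist. rewrite Rplus_comm. apply Rabs_le_sqrt_sum_sq. Qed.

Lemma idist_le_Rabs_add u v :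
  idist u v <= Rabs (ic u - ic v) + Rabs (ln (iw u) - ln (iw v)).
Proof. apply sqrt_sum_sq_le_Rabs_add. Qed.

Fixpoint riemann_sum (h : R -> R) (t xi : nat -> R) (n : nat) : R :=
  match n with
  | O => 0
  | S m => riemann_sum h t xi m + (t (S m) - t m) * h (xi (S m))
  end.

Lemma ic_iriemann_sum f t xi n :
  ic (iriemann_sum f t xi n) = riemann_sum (fun x => ic (f x)) t xi n.
Proof. induction n as [|n IH]; simpl; [reflexivity | now rewrite IH]. Qed.

Lemma ln_iw_iriemann_sum f t xi n :
  ln (iw (iriemann_sum f t xi n)) = riemann_sum (fun x => ln (iw (f x))) t xi n.
Proof.
  induction n as [|n IH]; simpl.
  - apply ln_1.
  - rewrite ln_mult by apply iw_pos || apply exp_pos.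
    unfold Rpower. now rewrite ln_exp, IH.
Qed.

Lemma riemann_sum_ext h g t xi n :
  (forall i, (i < n)%nat -> h (xi (S i)) = g (xi (S i))) ->
  riemann_sum h t xi n = riemann_sum g t xi n.
Proof.
  induction n as [|n IH]; intros Hhg; simpl; [reflexivity|].
  rewrite IH, Hhg; [reflexivity | lia | intros i Hi; apply Hhg; lia].
Qed.

Definition riemann_integral_is (h : R -> R) (a b I : R) : Prop :=
  forall eps, 0 < eps -> exists delta, 0 < delta /\
    forall n t xi, tagged_partition_fine a b delta n t xi ->
      Rabs (riemann_sum h t xi n - I) < eps.

Lemma tagged_partition_fine_weaken a b d d' n t xi :
  d <= d' -> tagged_partition_fine a b d n t xi -> tagged_partition_fine a b d' n t xi.
Proof.
  intros Hd (H0 & Hn & Hinc & Hfine & Htag).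
  refine (conj H0 (conj Hn (conj Hinc (conj _ Htag)))).
  intros i Hi. specialize (Hfine i Hi). lra.
Qed.

Lemma increasing_points_le (t : nat -> R) n :
  (forall i, (i < n)%nat -> t i < t (S i)) ->
  forall i j, (i <= j <= n)%nat -> t i <= t j.
Proof.
  intros Hinc i j. induction j as [|j IH]; intros Hij.
  - replace i with O by lia. lra.
  - destruct (Nat.eq_dec i (S j)) as [->|Hne]; [lra|].
    specialize (Hinc j ltac:(lia)). specialize (IH ltac:(lia)). lra.
Qed.

Lemma tagged_partition_tag_in a b d n t xi :
  tagged_partition_fine a b d n t xi ->
  forall i, (i < n)%nat -> a <= xi (S i) <= b.
Proof.
  intros (H0 & Hn & Hinc & _ & Htag) i Hi.
  pose proof (increasing_points_le t n Hinc O i ltac:(lia)).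
  pose proof (increasing_points_le t n Hinc (S i) n ltac:(lia)).
  specialize (Htag i Hi). lra.
Qed.

Lemma abs_RInt_sub_const_le h u v c eps :
  u <= v -> ex_RInt h u v -> (forall s, u <= s <= v -> Rabs (h s - c) <= eps) ->
  Rabs (RInt h u v - (v - u) * c) <= eps * (v - u).
Proof.
  intros Huv Hex Hclose.
  assert (E : RInt (fun s => h s - c) u v = RInt h u v - (v - u) * c).
  { rewrite (RInt_minus (V := R_CompleteNormedModule)), RInt_const;
      [reflexivity | exact Hex | apply (ex_RInt_const (V := R_NormedModule))]. }
  rewrite <- E, Rmult_comm. apply abs_RInt_le_const; [exact Huv | | exact Hclose].
  apply (ex_RInt_minus (V := R_NormedModule)); [exact Hex | apply ex_RInt_const].
Qed.

Lemma riemann_sum_RInt_error h eps d t xi n :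
  (forall u v, ex_RInt h u v) ->
  (forall x y, Rabs (x - y) < d -> Rabs (h x - h y) < eps) ->
  (forall i, (i < n)%nat -> t i < t (S i)) ->
  (forall i, (i < n)%nat -> t (S i) - t i < d) ->
  (forall i, (i < n)%nat -> t i <= xi (S i) <= t (S i)) ->
  Rabs (riemann_sum h t xi n - RInt h (t O) (t n)) <= eps * (t n - t O).
Proof.
  intros Hex Hunif.
  induction n as [|n IH]; intros Hinc Hfine Htag; simpl.
  - rewrite RInt_point. unfold zero; simpl. rewrite !Rminus_diag, Rabs_R0. lra.
  - specialize (IH (fun i Hi => Hinc i ltac:(lia)) (fun i Hi => Hfine i ltac:(lia))
                   (fun i Hi => Htag i ltac:(lia))).
    specialize (Hinc n ltac:(lia)); specialize (Hfine n ltac:(lia));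
      specialize (Htag n ltac:(lia)).
    assert (Hlast : Rabs (RInt h (t n) (t (S n)) - (t (S n) - t n) * h (xi (S n)))
                    <= eps * (t (S n) - t n)).
    { apply abs_RInt_sub_const_le; [lra | apply Hex |].
      intros s Hs. left. apply Hunif. split_Rabs; lra. }
    rewrite <- (RInt_Chasles h (t O) (t n) (t (S n))) by apply Hex.
    change plus with Rplus.
    pose proof (Rabs_triang (riemann_sum h t xi n - RInt h (t O) (t n))
                  (- (RInt h (t n) (t (S n)) - (t (S n) - t n) * h (xi (S n))))).
    rewrite Rabs_Ropp in *.
    replace (riemann_sum h t xi n + (t (S n) - t n) * h (xi (S n))
             - (RInt h (t O) (t n) + RInt h (t n) (t (S n))))
      with (riemann_sum h t xi n - RInt h (t O) (t n)
            + - (RInt h (t n) (t (S n)) - (t (S n) - t n) * h (xi (S n)))) by ring.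
    lra.
Qed.

Definition continuous_on_interval (h : R -> R) (a b : R) : Prop :=
  forall x, a <= x <= b ->
  forall eps, 0 < eps -> exists delta, 0 < delta /\
    forall y, a <= y <= b -> Rabs (y - x) < delta -> Rabs (h y - h x) < eps.

Lemma icontinuous_on_comp (F : Ival -> R) f a b :
  (forall u v, Rabs (F u - F v) <= idist u v) ->
  icontinuous_on f a b -> continuous_on_interval (fun x => F (f x)) a b.
Proof.
  intros HF Hf x Hx eps Heps.
  destruct (Hf x Hx eps Heps) as [delta [Hdelta Hclose]].
  exists delta. split; [exact Hdelta|].
  intros y Hy Hyx. eapply Rle_lt_trans; [apply HF | apply Hclose; assumption].
Qed.

Definition clamp (a b x : R) : R := Rmax a (Rmin b x).

Lemma clamp_in a b x : a < b -> a <= clamp a b x <= b.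
Proof. intros; unfold clamp, Rmax, Rmin; repeat destruct Rle_dec; lra. Qed.

Lemma clamp_id a b x : a <= x <= b -> clamp a b x = x.
Proof. intros; unfold clamp, Rmax, Rmin; repeat destruct Rle_dec; lra. Qed.

Lemma clamp_idem a b x : a < b -> clamp a b (clamp a b x) = clamp a b x.
Proof. intros; apply clamp_id, clamp_in; assumption. Qed.

Lemma clamp_lipschitz a b x y : a < b -> Rabs (clamp a b y - clamp a b x) <= Rabs (y - x).
Proof. intros; unfold clamp, Rmax, Rmin; repeat destruct Rle_dec; split_Rabs; lra. Qed.

Section ContinuousIntegrable.

Variables (h : R -> R) (a b : R).
Hypothesis hab : a < b.
Hypothesis h_cont : continuous_on_interval h a b.

Let hc (x : R) : R := h (clamp a b x).

Lemma continuity_pt_clamped x : continuity_pt hc x.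
Proof.
  intros eps Heps.
  destruct (h_cont (clamp a b x) (clamp_in a b x hab) eps Heps) as [d [Hd Hclose]].
  exists d. split; [exact Hd|]. intros y [_ Hy]. simpl in *. unfold R_dist in *.
  apply Hclose; [apply clamp_in; exact hab|].
  eapply Rle_lt_trans; [apply clamp_lipschitz; exact hab | exact Hy].
Qed.

Lemma clamped_uniformly_continuous eps : 0 < eps -> exists d, 0 < d /\
  forall x y, Rabs (x - y) < d -> Rabs (hc x - hc y) < eps.
Proof.
  intros Heps.
  destruct (@Heine_cor2 hc a b (fun x _ => continuity_pt_clamped x) (mkposreal eps Heps))
    as [[d Hd] Hclose].
  exists d. split; [exact Hd|]. intros x y Hxy.
  unfold hc. rewrite <- (clamp_idem a b x), <- (clamp_idem a b y) by exact hab.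
  apply Hclose; try (apply clamp_in; exact hab).
  simpl. rewrite Rabs_minus_sym.
  eapply Rle_lt_trans; [apply clamp_lipschitz; exact hab|].
  rewrite Rabs_minus_sym. exact Hxy.
Qed.

Lemma ex_RInt_clamped u v : ex_RInt hc u v.
Proof.
  apply (ex_RInt_continuous (V := R_CompleteNormedModule)).
  intros z _. apply continuity_pt_filterlim, continuity_pt_clamped.
Qed.

Lemma continuous_riemann_integrable : exists I, riemann_integral_is h a b I.
Proof.
  exists (RInt hc a b). intros eps Heps.
  destruct (clamped_uniformly_continuous (eps / (2 * (b - a))))
    as [d [Hd Hunif]]; [apply Rdiv_lt_0_compat; lra|].
  exists d. split; [exact Hd|].
  intros n t xi Hpart.
  rewrite (riemann_sum_ext h hc)
    by (intros i Hi; unfold hc; rewrite clamp_id;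
        [reflexivity | exact (tagged_partition_tag_in a b d n t xi Hpart i Hi)]).
  destruct Hpart as (H0 & Hn & Hinc & Hfine & Htag).
  pose proof (riemann_sum_RInt_error hc _ d t xi n ex_RInt_clamped Hunif Hinc Hfine Htag)
    as Herr.
  rewrite H0, Hn in Herr.
  replace (eps / (2 * (b - a)) * (b - a)) with (eps / 2) in Herr by (field; lra).
  lra.
Qed.

End ContinuousIntegrable.

Theorem theorem5p3 (f : R -> Ival) (a b : R) (hab : a < b) :
  icontinuous_on f a b -> interval_riemann_integrable f a b.
Proof.
  intros Hf.
  destruct (continuous_riemann_integrable (fun x => ic (f x)) a b hab
              (icontinuous_on_comp ic f a b Rabs_ic_sub_le_idist Hf)) as [Ic HIc].
  destruct (continuous_riemann_integrable (fun x => ln (iw (f x))) a b hab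
              (icontinuous_on_comp (fun u => ln (iw u)) f a b Rabs_ln_iw_sub_le_idist Hf))
    as [Iw HIw].
  exists (mkIval Ic (exp Iw) (exp_pos Iw)). intros eps Heps.
  destruct (HIc (eps / 2) ltac:(lra)) as [dc [Hdc Hc]].
  destruct (HIw (eps / 2) ltac:(lra)) as [dw [Hdw Hw]].
  exists (Rmin dc dw). split; [apply Rmin_pos; assumption|].
  intros n t xi Hpart.
  specialize (Hc n t xi (tagged_partition_fine_weaken _ _ _ _ _ _ _ (Rmin_l dc dw) Hpart)).
  specialize (Hw n t xi (tagged_partition_fine_weaken _ _ _ _ _ _ _ (Rmin_r dc dw) Hpart)).
  rewrite <- ic_iriemann_sum in Hc. rewrite <- ln_iw_iriemann_sum in Hw.
  eapply Rle_lt_trans; [apply idist_le_Rabs_add|]. simpl. rewrite ln_exp. lra.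
Qed.
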